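(* Let $\mathsf{Mon}$ be the category of monoids and monoid homomorphisms, and let $S$ be the class of Schreier split epimorphisms in $\mathsf{Mon}$. Then for every monoid homomorphism $h\colon E\to B$, the change-of-base functor $h^*\colon SPt_B(\mathsf{Mon})\to SPt_E(\mathsf{Mon})$ (given by pulling back along $h$) has a right adjoint. That is, $\mathsf{Mon}$ is $S$-locally algebraically cartesian closed.
   Context: A point in a category $\mathcal{C}$ is a 4-tuple $(A,B,f,s)$ with $f\colon A\to B$, $s\colon B\to A$, $fs=1_B$; morphisms of points $(A,B,f,s)\to(A',B',f',s')$ are pairs $(g,h)$ with $hf=f'g$ and $gs=s'h$. For a fixed object $B$, $Pt_B(\mathcal{C})$ is the category of points with codomain $B$ and morphisms of the form $(g,1_B)$. For a morphism $h\colon E\to B$, the change-of-base functor $h^*\colon Pt_B(\mathcal C)\to Pt_E(\mathcal C)$ sends a point over $B$ to its pullback along $h$ (with the induced section). A split epimorphism $(A,B,f,s)$ of monoids (written additively, neutral element $0$) is a Schreier split epimorphism if for every $a\in A$ there exists a unique $\alpha\in\mathrm{Ker}(f)$ with $a=\alpha+sf(a)$. The class $S$ of Schreier split epimorphisms is stable under pullback; $SPt_B(\mathsf{Mon})$ denotes the full subcategory of $Pt_B(\mathsf{Mon})$ of points in $S$, and $h^*$ restricts to these subcategories. *)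

From Stdlib Require Import ProofIrrelevance.

Set Implicit Arguments.
Unset Strict Implicit.

(* Monoids, written additively (operation [mop], neutral element [mzero]);
   not assumed commutative. *)
Record monoid := Monoid {
  mcar :> Type;
  mop : mcar -> mcar -> mcar;
  mzero : mcar;
  massoc : forall x y z, mop x (mop y z) = mop (mop x y) z;
  madd0 : forall x, mop x mzero = x;
  madd0l : forall x, mop mzero x = x
}.
Arguments mop {m}.
Arguments mzero {m}.

Record mhom (M N : monoid) := MHom {
  hmap :> M -> N;
  hop : forall x y, hmap (mop x y) = mop (hmap x) (hmap y);
  hzero : hmap mzero = mzero
}.

Record point (B : monoid) := Point {
  pA : monoid;
  pf : mhom pA B;
  ps : mhom B pA;
  psplit : forall b, pf (ps b) = b
}.

Definition schreier (B : monoid) (P : point B) : Prop :=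
  forall a : pA P,
    exists! alpha : pA P, pf P alpha = mzero /\ a = mop alpha (ps P (pf P a)).

Record pmor (B : monoid) (P Q : point B) := PMor {
  pm :> mhom (pA P) (pA Q);
  pm_f : forall a, pf Q (pm a) = pf P a;
  pm_s : forall b, pm (ps P b) = ps Q b
}.

Section Pullback.
Variables (E B : monoid) (h : mhom E B) (P : point B).

Definition pbcar := { p : E * pA P | h (fst p) = pf P (snd p) }.

Definition pbop (x y : pbcar) : pbcar.
Proof.
  refine (exist _ (mop (fst (proj1_sig x)) (fst (proj1_sig y)),
                   mop (snd (proj1_sig x)) (snd (proj1_sig y))) _).
  simpl. rewrite !hop. destruct x as [[e a] Hx], y as [[e' a'] Hy]; simpl in *.
  now rewrite Hx, Hy.
Defined.

Definition pbzero : pbcar.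
Proof.
  refine (exist _ (mzero, mzero) _). simpl. now rewrite !hzero.
Defined.

Lemma pb_eq (x y : pbcar) : proj1_sig x = proj1_sig y -> x = y.
Proof.
  destruct x as [p Hp], y as [q Hq]; simpl; intros ->.
  now rewrite (proof_irrelevance _ Hp Hq).
Qed.

Definition pbmon : monoid.
Proof.
  refine (@Monoid pbcar pbop pbzero _ _ _); intros;
  apply pb_eq; simpl; now rewrite ?massoc, ?madd0, ?madd0l, <- ?surjective_pairing.
Defined.

Definition pbfst : mhom pbmon E.
Proof.
  refine (@MHom pbmon E (fun x => fst (proj1_sig x)) _ _); reflexivity.
Defined.

Definition pbsec_fun (e : E) : pbmon.
Proof.
  refine (exist _ (e, ps P (h e)) _). simpl. now rewrite psplit.
Defined.

Definition pbsec : mhom E pbmon.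
Proof.
  refine (@MHom E pbmon pbsec_fun _ _); intros; apply pb_eq; simpl;
  now rewrite ?hop, ?hzero.
Defined.

Definition pb : point E := @Point E pbmon pbfst pbsec (fun e => eq_refl).
End Pullback.

Section PullbackMor.
Variables (E B : monoid) (h : mhom E B) (P Q : point B) (g : pmor P Q).

Definition pbmor_fun (x : pbmon h P) : pbmon h Q.
Proof.
  refine (exist _ (fst (proj1_sig x), g (snd (proj1_sig x))) _).
  simpl. rewrite pm_f. exact (proj2_sig x).
Defined.

Definition pbmor_hom : mhom (pbmon h P) (pbmon h Q).
Proof.
  refine (@MHom _ _ pbmor_fun _ _); intros; apply pb_eq; simpl;
  now rewrite ?hop, ?hzero.
Defined.

Definition pbmor : pmor (pb h P) (pb h Q).
Proof.
  refine (@PMor E (pb h P) (pb h Q) pbmor_hom _ _).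
  - intros; reflexivity.
  - intros b; apply pb_eq; simpl; now rewrite pm_s.
Defined.
End PullbackMor.

From Stdlib Require Import ProofIrrelevance FunctionalExtensionality ClassicalEpsilon.
Set Implicit Arguments.

(* The right adjoint sends a point Y over E to a "coinduced" point G(Y) over B:
   its elements are pairs (u, b) with b in B and u : B -> Ker(f_Y) satisfying
   s(e) + u(x) = u(h(e) + x) + s(e), multiplied by
   (u, b) + (v, c) = (z |-> u z + v (z + b), b + c).
   Such a pair splits uniquely as (u, 0) + (0, b), so G(Y) is Schreier even
   when Y is not.
   The counit is (e, (u, b)) |-> u 0 + s(e).  For a Schreier point X with
   kernel projection q, a morphism f : h^*(X) -> Y is transposed to
   a |-> (x |-> f(0, q(s x + a)), f a); it is the only possible transpose
   because any g : X -> G(Y) satisfies g(s z + a)(0) = g(a)(z). *)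

Declare Scope monoid_scope.
Local Infix "+" := mop : monoid_scope.
Local Open Scope monoid_scope.

Section SchreierRetraction.
Variables (B : monoid) (X : point B).
Hypothesis HX : schreier X.

Definition kerpart (a : pA X) : pA X :=
  proj1_sig (constructive_indefinite_description _ (HX a)).

Lemma kerpart_spec a : pf X (kerpart a) = mzero /\ a = kerpart a + ps X (pf X a).
Proof. exact (proj1 (proj2_sig (constructive_indefinite_description _ (HX a)))). Qed.

Lemma kerpart_ker a : pf X (kerpart a) = mzero.
Proof. exact (proj1 (kerpart_spec a)). Qed.

Lemma kerpart_decomp a : a = kerpart a + ps X (pf X a).
Proof. exact (proj2 (kerpart_spec a)). Qed.

Lemma kerpart_unique a k :
  pf X k = mzero -> a = k + ps X (pf X a) -> kerpart a = k.
Proof.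
  intros Hk Ha.
  apply (proj2 (proj2_sig (constructive_indefinite_description _ (HX a)))).
  now split.
Qed.

Lemma kerpart_addl k w : pf X k = mzero -> kerpart (k + w) = k + kerpart w.
Proof.
  intros Hk. apply kerpart_unique.
  - now rewrite hop, Hk, kerpart_ker, madd0.
  - now rewrite hop, Hk, madd0l, <- massoc, <- kerpart_decomp.
Qed.

Lemma kerpart_add_sec w c : kerpart (w + ps X c) = kerpart w.
Proof.
  apply kerpart_unique; [apply kerpart_ker|].
  now rewrite hop, psplit, hop, massoc, <- kerpart_decomp.
Qed.

Lemma kerpart_sec c : kerpart (ps X c) = mzero.
Proof.
  apply kerpart_unique; [apply hzero|]. now rewrite psplit, madd0l.
Qed.

Lemma kerpart_sec_conj c w : kerpart (ps X c + w) + ps X c = ps X c + kerpart w.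
Proof.
  rewrite (kerpart_decomp w) at 1.
  rewrite massoc, kerpart_add_sec.
  rewrite (kerpart_decomp (ps X c + kerpart w)) at 2.
  now rewrite hop, psplit, kerpart_ker, madd0.
Qed.

Lemma kerpart_sec_add x a a' :
  kerpart (ps X x + (a + a'))
  = kerpart (ps X x + a) + kerpart (ps X (x + pf X a) + a').
Proof.
  rewrite massoc, (kerpart_decomp (ps X x + a)) at 1.
  rewrite (hop (pf X) (ps X x)), psplit, <- massoc, kerpart_addl; [reflexivity|].
  apply kerpart_ker.
Qed.

End SchreierRetraction.

Section Coinduced.
Variables (E B : monoid) (h : mhom E B) (Y : point E).

Record coind_car := CoindElt {
  cfun : B -> pA Y;
  cbase : B;
  cfun_ker : forall z, pf Y (cfun z) = mzero;
  cfun_conj : forall e z, ps Y e + cfun z = cfun (h e + z) + ps Y e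
}.

Lemma coind_eq (x y : coind_car) :
  (forall z, cfun x z = cfun y z) -> cbase x = cbase y -> x = y.
Proof.
  destruct x as [u b Hu1 Hu2], y as [v c Hv1 Hv2]; simpl; intros Huv ->.
  assert (u = v) as <- by (apply functional_extensionality; exact Huv).
  f_equal; apply proof_irrelevance.
Qed.

Definition coind_add (x y : coind_car) : coind_car.
Proof.
  refine (@CoindElt (fun z => cfun x z + cfun y (z + cbase x)) (cbase x + cbase y) _ _).
  - intro z. now rewrite hop, !cfun_ker, madd0.
  - intros e z. now rewrite massoc, cfun_conj, <- !massoc, cfun_conj, !massoc.
Defined.

Definition coind_const (b : B) : coind_car.
Proof.
  refine (@CoindElt (fun _ => mzero) b _ _); intros.
  - apply hzero.
  - now rewrite madd0, madd0l.
Defined.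

Definition coind_mon : monoid.
Proof.
  refine (@Monoid coind_car coind_add (coind_const mzero) _ _ _); intros;
  apply coind_eq; simpl; intros; now rewrite ?massoc, ?madd0, ?madd0l.
Defined.

Definition coind_proj : mhom coind_mon B :=
  @MHom coind_mon B cbase (fun _ _ => eq_refl) eq_refl.

Definition coind_sec : mhom B coind_mon.
Proof.
  refine (@MHom B coind_mon coind_const _ eq_refl); intros.
  apply coind_eq; simpl; intros; now rewrite ?madd0.
Defined.

Definition coind : point B := @Point B coind_mon coind_proj coind_sec (fun _ => eq_refl).

Lemma coind_schreier : schreier coind.
Proof.
  intros x.
  exists (@CoindElt (cfun x) mzero (cfun_ker x) (cfun_conj x)). split.
  - split; [reflexivity|].
    apply coind_eq; simpl; intros; now rewrite ?madd0, ?madd0l.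
  - intros k [Hk Hx]. simpl in Hk.
    apply coind_eq; simpl; [intros z|now rewrite Hk].
    apply (f_equal (fun y : coind_mon => cfun y z)) in Hx. simpl in Hx.
    now rewrite Hx, madd0.
Qed.

Definition counit_fun (x : pbmon h coind) : pA Y :=
  cfun (snd (proj1_sig x)) mzero + ps Y (fst (proj1_sig x)).

Definition counit_hom : mhom (pbmon h coind) (pA Y).
Proof.
  refine (@MHom _ _ counit_fun _ _); unfold counit_fun.
  - intros [[e x] Hx] [[e' y] Hy]; simpl in *.
    rewrite madd0l, hop, <- Hx, <- !massoc. f_equal. rewrite !massoc. f_equal.
    now rewrite cfun_conj, madd0.
  - simpl. now rewrite hzero, madd0.
Defined.

Definition counit : pmor (pb h coind) Y.
Proof.
  refine (@PMor E (pb h coind) Y counit_hom _ _).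
  - intros [[e x] Hx]; simpl; unfold counit_fun; simpl.
    now rewrite hop, cfun_ker, madd0l, psplit.
  - intros e; simpl; unfold counit_fun; simpl. apply madd0l.
Defined.

Section Transpose.
Variables (X : point B) (HX : schreier X) (f : pmor (pb h X) Y).

Definition pb_ker {k : pA X} (Hk : pf X k = mzero) : pbmon h X.
Proof. refine (exist _ (mzero, k) _). simpl. now rewrite hzero, Hk. Defined.

Definition transpose_at (a : pA X) (x : B) : pA Y :=
  f (pb_ker (kerpart_ker HX (ps X x + a))).

Definition transpose_fun (a : pA X) : coind_mon.
Proof.
  refine (@CoindElt (transpose_at a) (pf X a) _ _); unfold transpose_at.
  - intros x. now rewrite pm_f.
  - intros e x. rewrite <- (pm_s f e), <- !hop. f_equal. apply pb_eq; simpl.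
    rewrite madd0, madd0l. f_equal.
    now rewrite hop, <- massoc, kerpart_sec_conj.
Defined.

Definition transpose_hom : mhom (pA X) coind_mon.
Proof.
  refine (@MHom (pA X) coind_mon transpose_fun _ _).
  - intros a a'. apply coind_eq; simpl; [intros z|apply hop].
    unfold transpose_at. rewrite <- hop. f_equal. apply pb_eq; simpl.
    rewrite madd0. f_equal. apply kerpart_sec_add.
  - apply coind_eq; simpl; [intros z|apply hzero].
    unfold transpose_at. rewrite <- (hzero f). f_equal. apply pb_eq; simpl.
    now rewrite madd0, kerpart_sec.
Defined.

Definition transpose : pmor X coind.
Proof.
  refine (@PMor B X coind transpose_hom (fun _ => eq_refl) _).
  intros b. apply coind_eq; simpl; [intros z|apply psplit].
  unfold transpose_at. rewrite <- (hzero f). f_equal. apply pb_eq; simpl.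
  now rewrite <- hop, kerpart_sec.
Defined.

Lemma counit_transpose x : counit (pbmor h transpose x) = f x.
Proof.
  simpl. unfold counit_fun; simpl. unfold transpose_at.
  rewrite <- (pm_s f), <- (hop f). f_equal. apply pb_eq.
  destruct x as [[e a] Hx]; simpl in *.
  now rewrite madd0l, hzero, madd0l, Hx, <- kerpart_decomp.
Qed.

Lemma transpose_unique (g : pmor X coind) :
  (forall x, counit (pbmor h g x) = f x) -> forall a, g a = transpose a.
Proof.
  intros Hg a.
  set (U := fun c z => cfun (g c) z).
  assert (U_ker : forall k (Hk : pf X k = mzero), U k mzero = f (pb_ker Hk)).
  { intros k Hk. rewrite <- Hg. simpl. unfold counit_fun; simpl.
    now rewrite hzero, madd0. }
  assert (U_shift : forall z c, U (ps X z + c) mzero = U c z).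
  { intros z c. unfold U. rewrite hop, pm_s. simpl. now rewrite !madd0l. }
  assert (U_add_sec : forall k c z, U (k + ps X c) z = U k z).
  { intros k c z. unfold U. rewrite hop, pm_s. simpl. apply madd0. }
  apply coind_eq; [intros z|apply (pm_f g)].
  change (U a z = transpose_at a z). rewrite <- U_shift. unfold transpose_at.
  rewrite (kerpart_decomp HX (ps X z + a)) at 1. rewrite U_add_sec. apply U_ker.
Qed.

End Transpose.
End Coinduced.

Theorem mainTheorem1 (E B : monoid) (h : mhom E B) :
  forall Y : point E, schreier Y ->
  exists (GY : point B) (eps : pmor (pb h GY) Y),
    schreier GY /\
    forall (X : point B), schreier X ->
    forall f : pmor (pb h X) Y,
    exists g : pmor X GY,
      (forall x, eps (pbmor h g x) = f x) /\
      (forall g' : pmor X GY,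
         (forall x, eps (pbmor h g' x) = f x) -> forall a, g' a = g a).
Proof.
  intros Y _. exists (coind h Y), (counit h Y). split; [apply coind_schreier|].
  intros X HX f. exists (transpose HX f).
  split; [apply counit_transpose|apply transpose_unique].
Qed.
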